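(* Let $P=\sum_{k\in\mathbb{Z}}\alpha_kx^k+\sum_{k\in\mathbb{Z}}\beta_k\,yx^k$ (finitely many nonzero terms) with all $\alpha_k,\beta_k\in\mathbb{R}$, and suppose $P$ is reciprocal as an element of $\mathbb{R}[\mathbb{Z}\times\mathbb{Z}/2\mathbb{Z}]$, where $\mathbb{Z}\times\mathbb{Z}/2\mathbb{Z}=\langle x,y\mid y^2,[x,y]\rangle$. Regard $P$ also as an element of $\mathbb{C}[D_\infty]$, where $D_\infty=\langle x,y\mid y^2,yxyx\rangle$ (same coefficients, same words). Let $k=\sum_k(|\alpha_k|+|\beta_k|)$ and $|\lambda|<1/k$. Then \[ m_{\mathbb{Z}\times\mathbb{Z}/2\mathbb{Z}}(P,\lambda)=m_{D_\infty}(P,\lambda). \]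
   Context: For a group $\Gamma$ and $Q=\sum_{g\in\Gamma}c_g g\in\mathbb{C}\Gamma$ (finite sum), the reciprocal is $Q^*=\sum_g\overline{c_g}\,g^{-1}$, and $Q$ is reciprocal if $Q=Q^*$. For reciprocal $P\in\mathbb{C}\Gamma$ with $l_1$-norm $k=\sum_g|c_g|$ and $|\lambda|<1/k$, define $m_\Gamma(P,\lambda)=-\sum_{n\ge1}a_n\lambda^n/n$, where $a_n$ is the coefficient of the identity element of $\Gamma$ in $P^n$. In the paper $D_\infty$ is written $\langle\rho,\sigma\mid\sigma^2,\sigma\rho\sigma\rho\rangle$ with $x=\rho$, $y=\sigma$. *)

From Stdlib Require Import Reals ZArith List Bool.
From Coquelicot Require Export Coquelicot.
Import ListNotations.

(* Group elements of both Z x Z/2Z and D_infty are written uniquely as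
   normal words  y^b x^k  with b : bool, k : Z; encoded as the pair (b, k). *)
Definition elt : Type := (bool * Z)%type.

Definition elt_eqb (g h : elt) : bool :=
  Bool.eqb (fst g) (fst h) && Z.eqb (snd g) (snd h).

Definition elt_one : elt := (false, 0%Z).

(* Z x Z/2Z = <x, y | y^2, [x,y]> : (y^a x^k)(y^b x^l) = y^(a+b) x^(k+l). *)
Definition mulZ2 (g h : elt) : elt :=
  (xorb (fst g) (fst h), (snd g + snd h)%Z).
Definition invZ2 (g : elt) : elt := (fst g, (- snd g)%Z).

(* D_infty = <x, y | y^2, yxyx> : x^k y = y x^(-k), hence
   (y^a x^k)(y^b x^l) = y^(a+b) x^((-1)^b k + l). *)
Definition mulD (g h : elt) : elt :=
  (xorb (fst g) (fst h), ((if fst h then - snd g else snd g) + snd h)%Z).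
Definition invD (g : elt) : elt :=
  if fst g then g else (false, (- snd g)%Z).

(* An element of the complex group algebra, as a finite formal sum
   sum_i c_i g_i  (list of (coefficient, group element)). *)
Definition galg : Type := list (C * elt).

Definition gmul (mul : elt -> elt -> elt) (p q : galg) : galg :=
  flat_map (fun a => map (fun b => (Cmult (fst a) (fst b), mul (snd a) (snd b))) q) p.

Fixpoint gpow (mul : elt -> elt -> elt) (p : galg) (n : nat) : galg :=
  match n with
  | O => [(RtoC 1, elt_one)]
  | S m => gmul mul p (gpow mul p m)
  end.

Definition coeff (p : galg) (g : elt) : C :=
  fold_right Cplus (RtoC 0)
    (map fst (filter (fun a => elt_eqb (snd a) g) p)).

(* reciprocal Q* = sum conj(c_g) g^-1 ; Q reciprocal iff Q = Q*,
   i.e. coefficientwise  c_g = conj (c_{g^-1}). *)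
Definition reciprocal (inv : elt -> elt) (p : galg) : Prop :=
  forall g : elt, coeff p g = Cconj (coeff p (inv g)).

Definition a_coef (mul : elt -> elt -> elt) (p : galg) (n : nat) : C :=
  coeff (gpow mul p n) elt_one.

Definition mahler_is (mul : elt -> elt -> elt) (p : galg) (lam : C) (l : C) : Prop :=
  is_series (V := C_NormedModule)
    (fun n : nat =>
       Copp (Cdiv (Cmult (a_coef mul p (S n)) (Cpow lam (S n))) (RtoC (INR (S n)))))
    l.

Definition zrange (N : nat) : list Z :=
  map (fun i => (Z.of_nat i - Z.of_nat N)%Z) (seq 0 (2 * N + 1)).

Definition Pelt (alpha beta : Z -> R) (N : nat) : galg :=
  flat_map (fun k => [(RtoC (alpha k), (false, k)); (RtoC (beta k), (true, k))])
    (zrange N).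

Definition l1norm (alpha beta : Z -> R) (N : nat) : R :=
  fold_right Rplus 0%R (map (fun k => (Rabs (alpha k) + Rabs (beta k))%R) (zrange N)).

From Stdlib Require Import Reals ZArith List Permutation Lia Lra Bool.
From Coquelicot Require Import Coquelicot.
Import ListNotations.

(* For both groups the coefficient of g in P * Q is the convolution
   sum_a P(a) Q(a^-1 g).  Writing a = y^b x^k, the element a^-1 g is the same
   in Z x Z/2Z and in D_infty except that x^k is replaced by x^-k when the
   y-exponents of a and g differ.  Reciprocity of a real P means exactly that
   alpha and beta are even functions, so reindexing k -> -k shows that left
   multiplication by P is the same operator on coefficient functions for both
   group laws.  Hence all coefficients of P^n, in particular the a_n, agree, and
   the common series converges since |a_n| <= k^n. *)

Open Scope C_scope.

Definition csum {A} (l : list A) (F : A -> C) : C := fold_right Cplus 0 (map F l).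

Lemma csum_nil {A} (F : A -> C) : csum [] F = 0.
Proof. reflexivity. Qed.

Lemma csum_cons {A} (a : A) l F : csum (a :: l) F = F a + csum l F.
Proof. reflexivity. Qed.

Lemma csum_app {A} (l1 l2 : list A) F : csum (l1 ++ l2) F = csum l1 F + csum l2 F.
Proof. induction l1 as [|a l1 IH]; simpl; [rewrite csum_nil; ring|]. rewrite !csum_cons, IH. ring. Qed.

Lemma csum_ext {A} (l : list A) F G :
  (forall x, In x l -> F x = G x) -> csum l F = csum l G.
Proof. intro H. unfold csum. f_equal. now apply map_ext_in. Qed.

Lemma csum_plus {A} (l : list A) F G :
  csum l (fun x => F x + G x) = csum l F + csum l G.
Proof. induction l as [|a l IH]; [rewrite !csum_nil; ring|]. rewrite !csum_cons, IH. ring. Qed.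

Lemma csum_scal {A} (l : list A) c F : csum l (fun x => c * F x) = c * csum l F.
Proof. induction l as [|a l IH]; [rewrite !csum_nil; ring|]. rewrite !csum_cons, IH. ring. Qed.

Lemma csum_map {A B} (l : list A) (f : A -> B) F :
  csum (map f l) F = csum l (fun x => F (f x)).
Proof. unfold csum. now rewrite map_map. Qed.

Lemma csum_flat_map {A B} (l : list A) (f : A -> list B) F :
  csum (flat_map f l) F = csum l (fun x => csum (f x) F).
Proof. induction l as [|a l IH]; [reflexivity|]. simpl. now rewrite csum_app, IH. Qed.

Lemma csum_perm {A} (l l' : list A) F : Permutation l l' -> csum l F = csum l' F.
Proof.
  induction 1; rewrite ?csum_cons; try ring.
  - now rewrite IHPermutation.
  - congruence.
Qed.

Lemma csum_indicator (l : list Z) k (f : Z -> C) : NoDup l ->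
  csum l (fun j => if Z.eqb j k then f j else 0) =
  if in_dec Z.eq_dec k l then f k else 0.
Proof.
  induction 1 as [|j l Hj _ IH]; [reflexivity|].
  rewrite csum_cons, IH.
  destruct (Z.eqb_spec j k) as [<-|Hjk].
  - destruct (in_dec Z.eq_dec j l); [contradiction|].
    destruct (in_dec Z.eq_dec j (j :: l)) as [_|H]; [ring|].
    exfalso. apply H. now left.
  - destruct (in_dec Z.eq_dec k l), (in_dec Z.eq_dec k (j :: l)) as [H|H];
      simpl in *; try ring; intuition.
Qed.

Lemma elt_eqb_spec g h : elt_eqb g h = true <-> g = h.
Proof.
  destruct g as [a k], h as [b l]. unfold elt_eqb; simpl.
  rewrite andb_true_iff, eqb_true_iff, Z.eqb_eq.
  split; [intros [-> ->]; reflexivity | now injection 1].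
Qed.

Lemma coeff_csum p g :
  coeff p g = csum p (fun a => if elt_eqb (snd a) g then fst a else 0).
Proof.
  induction p as [|a p IH]; [reflexivity|].
  unfold coeff in *; simpl. rewrite csum_cons, <- IH.
  destruct (elt_eqb (snd a) g); simpl; ring.
Qed.

Definition conv (mul : elt -> elt -> elt) (inv : elt -> elt) (p : galg)
  (q : elt -> C) (g : elt) : C :=
  csum p (fun a => fst a * q (mul (inv (snd a)) g)).

Lemma coeff_gmul mul inv (mulK : forall a b g, mul a b = g <-> b = mul (inv a) g)
  p q g : coeff (gmul mul p q) g = conv mul inv p (coeff q) g.
Proof.
  rewrite coeff_csum. unfold gmul, conv. rewrite csum_flat_map.
  apply csum_ext. intros a _.
  rewrite csum_map, coeff_csum, <- csum_scal. apply csum_ext. intros b _. simpl.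
  replace (elt_eqb (mul (snd a) (snd b)) g)
    with (elt_eqb (snd b) (mul (inv (snd a)) g))
    by (apply eq_iff_eq_true; rewrite !elt_eqb_spec; symmetry; apply mulK).
  destruct (elt_eqb _ _); simpl; ring.
Qed.

Lemma mulZ2_eq_iff a b g : mulZ2 a b = g <-> b = mulZ2 (invZ2 a) g.
Proof.
  destruct a as [[] a], b as [[] b], g as [[] g]; unfold mulZ2, invZ2; simpl;
    split; intro H; injection H as H; subst; f_equal; lia.
Qed.

Lemma mulD_eq_iff a b g : mulD a b = g <-> b = mulD (invD a) g.
Proof.
  destruct a as [[] a], b as [[] b], g as [[] g]; unfold mulD, invD; simpl;
    split; intro H; injection H as H; subst; f_equal; lia.
Qed.

Lemma in_zrange N k : In k (zrange N) <-> (- Z.of_nat N <= k <= Z.of_nat N)%Z.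
Proof.
  unfold zrange. rewrite in_map_iff. split.
  - intros [i [<- Hi]]. apply in_seq in Hi. lia.
  - intro H. exists (Z.to_nat (k + Z.of_nat N)). rewrite in_seq. lia.
Qed.

Lemma NoDup_zrange N : NoDup (zrange N).
Proof.
  apply FinFun.Injective_map_NoDup; [intros i j H; lia | apply seq_NoDup].
Qed.

Lemma csum_zrange_opp N F : csum (zrange N) F = csum (zrange N) (fun k => F (- k)%Z).
Proof.
  rewrite <- (csum_map _ Z.opp F). apply csum_perm, NoDup_Permutation.
  - apply NoDup_zrange.
  - apply FinFun.Injective_map_NoDup; [intros i j H; lia | apply NoDup_zrange].
  - intro k. rewrite in_map_iff, in_zrange. split.
    + intro Hk. exists (- k)%Z. rewrite in_zrange. lia.
    + intros [j [<- Hj]]. apply in_zrange in Hj. lia.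
Qed.

Lemma csum_Pelt alpha beta N G : csum (Pelt alpha beta N) G =
  csum (zrange N) (fun k => G (RtoC (alpha k), (false, k)) + G (RtoC (beta k), (true, k))).
Proof.
  unfold Pelt. rewrite csum_flat_map. apply csum_ext. intros k _. cbn. ring.
Qed.

Section Reciprocal.

Variables (alpha beta : Z -> R) (N : nat).
Hypothesis hsupp : forall k : Z, (Z.of_nat N < Z.abs k)%Z -> alpha k = 0%R /\ beta k = 0%R.

Lemma coeff_Pelt (b : bool) k :
  coeff (Pelt alpha beta N) (b, k) = RtoC (if b then beta k else alpha k).
Proof.
  rewrite coeff_csum, csum_Pelt.
  transitivity (csum (zrange N)
    (fun j => if Z.eqb j k then RtoC (if b then beta j else alpha j) else 0)).
  { apply csum_ext. intros j _. unfold elt_eqb; simpl.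
    destruct b, (Z.eqb j k); simpl; ring. }
  rewrite csum_indicator by apply NoDup_zrange.
  destruct (in_dec Z.eq_dec k (zrange N)) as [|Hk]; [reflexivity|].
  rewrite in_zrange in Hk. destruct (hsupp k) as [-> ->]; [lia|].
  now destruct b.
Qed.

Hypothesis hrec : reciprocal invZ2 (Pelt alpha beta N).

Lemma reciprocal_Pelt_even k : alpha (- k)%Z = alpha k /\ beta (- k)%Z = beta k.
Proof.
  pose proof (hrec (false, k)) as Ha. pose proof (hrec (true, k)) as Hb.
  unfold invZ2 in Ha, Hb. simpl in Ha, Hb. rewrite !coeff_Pelt in Ha, Hb.
  apply (f_equal fst) in Ha. apply (f_equal fst) in Hb. simpl in Ha, Hb.
  now split.
Qed.

Lemma conv_Pelt_mulZ2_mulD q g :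
  conv mulZ2 invZ2 (Pelt alpha beta N) q g = conv mulD invD (Pelt alpha beta N) q g.
Proof.
  unfold conv. rewrite !csum_Pelt, !csum_plus.
  destruct g as [[] g]; simpl; f_equal; try reflexivity;
    rewrite csum_zrange_opp; apply csum_ext; intros k _;
    destruct (reciprocal_Pelt_even k) as [Ha Hb]; rewrite ?Ha, ?Hb;
    unfold mulZ2, invZ2, mulD, invD; simpl; do 3 f_equal; lia.
Qed.

Lemma coeff_gpow_mulZ2_mulD n g :
  coeff (gpow mulZ2 (Pelt alpha beta N) n) g = coeff (gpow mulD (Pelt alpha beta N) n) g.
Proof.
  revert g. induction n as [|n IH]; intro g; [reflexivity|].
  cbn [gpow].
  rewrite (coeff_gmul _ _ mulZ2_eq_iff), (coeff_gmul _ _ mulD_eq_iff).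
  rewrite <- conv_Pelt_mulZ2_mulD.
  apply csum_ext. intros a _. now rewrite IH.
Qed.

End Reciprocal.

Close Scope C_scope.
Open Scope R_scope.

Definition l1 (p : galg) : R := fold_right Rplus 0 (map (fun a => Cmod (fst a)) p).

Lemma l1_ge0 p : 0 <= l1 p.
Proof.
  induction p as [|a p IH]; unfold l1 in *; simpl; [lra|].
  pose proof (Cmod_ge_0 (fst a)). lra.
Qed.

Lemma l1_app p q : l1 (p ++ q) = l1 p + l1 q.
Proof. induction p as [|a p IH]; unfold l1 in *; simpl; [ring|]. rewrite IH. ring. Qed.

Lemma l1_scale mul (a : C * elt) q :
  l1 (map (fun b => (fst a * fst b, mul (snd a) (snd b))%C) q) = Cmod (fst a) * l1 q.
Proof.
  induction q as [|b q IH]; unfold l1 in *; simpl; [ring|].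
  rewrite IH, Cmod_mult. ring.
Qed.

Lemma l1_gmul mul p q : l1 (gmul mul p q) = l1 p * l1 q.
Proof.
  induction p as [|a p IH]; [unfold l1; simpl; ring|].
  unfold gmul in *. simpl. rewrite l1_app, IH, l1_scale.
  unfold l1; simpl. ring.
Qed.

Lemma l1_gpow mul p n : l1 (gpow mul p n) = l1 p ^ n.
Proof.
  induction n as [|n IH]; simpl; [unfold l1; simpl; rewrite Cmod_1; ring|].
  rewrite l1_gmul, IH. ring.
Qed.

Lemma Cmod_coeff_le p g : Cmod (coeff p g) <= l1 p.
Proof.
  induction p as [|a p IH]; unfold coeff, l1 in *; simpl; [rewrite Cmod_0; lra|].
  pose proof (Cmod_ge_0 (fst a)).
  destruct (elt_eqb (snd a) g); simpl; [|lra].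
  eapply Rle_trans; [apply Cmod_triangle | lra].
Qed.

Lemma Cmod_a_coef_le mul p n : Cmod (a_coef mul p n) <= l1 p ^ n.
Proof. rewrite <- (l1_gpow mul). apply Cmod_coeff_le. Qed.

Lemma l1_Pelt alpha beta N : l1 (Pelt alpha beta N) = l1norm alpha beta N.
Proof.
  unfold Pelt, l1norm. induction (zrange N) as [|k ks IH]; [reflexivity|].
  simpl. rewrite <- IH. unfold l1; simpl. rewrite !Cmod_R. ring.
Qed.

Definition mahler_term (mul : elt -> elt -> elt) (p : galg) (lam : C) (n : nat) : C :=
  Copp (Cdiv (Cmult (a_coef mul p (S n)) (Cpow lam (S n))) (RtoC (INR (S n)))).

Lemma Cmod_mahler_term_le mul p lam n :
  Cmod lam * l1 p <= 1 -> Cmod (mahler_term mul p lam n) <= (Cmod lam * l1 p) ^ n.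
Proof.
  intro Hr. set (r := Cmod lam * l1 p) in *.
  assert (Hr0 : 0 <= r) by (apply Rmult_le_pos; [apply Cmod_ge_0 | apply l1_ge0]).
  assert (HSn : 1 <= INR (S n)) by (rewrite S_INR; pose proof (pos_INR n); lra).
  unfold mahler_term.
  assert (HSn0 : RtoC (INR (S n)) <> 0%C)
    by (intro E; apply (not_0_INR (S n)); [lia | exact (f_equal fst E)]).
  rewrite Cmod_opp, Cmod_div, Cmod_mult, Cmod_pow, Cmod_R, Rabs_right by (exact HSn0 || lra).
  apply Rle_div_l; [lra|].
  apply Rle_trans with (r ^ S n * 1).
  - rewrite Rmult_1_r. unfold r. rewrite Rpow_mult_distr, Rmult_comm.
    apply Rmult_le_compat_l; [apply pow_le, Cmod_ge_0 | apply Cmod_a_coef_le].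
  - change (r ^ S n) with (r * r ^ n). pose proof (pow_le r n Hr0). nra.
Qed.

Lemma ex_mahler mul p lam :
  Cmod lam * l1 p < 1 -> exists l : C, mahler_is mul p lam l.
Proof.
  intro Hr.
  apply (ex_series_le (V := C_CompleteNormedModule) (mahler_term mul p lam)
           (fun n => (Cmod lam * l1 p) ^ n)).
  - intro n. apply Cmod_mahler_term_le. lra.
  - apply ex_series_geom.
    rewrite Rabs_right; [lra|].
    apply Rle_ge, Rmult_le_pos; [apply Cmod_ge_0 | apply l1_ge0].
Qed.

Theorem corollary7p4 (alpha beta : Z -> R) (N : nat)
  (hsupp : forall k : Z, (Z.of_nat N < Z.abs k)%Z -> alpha k = 0%R /\ beta k = 0%R)
  (hrec : reciprocal invZ2 (Pelt alpha beta N))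
  (lam : C) (hlam : (Cmod lam * l1norm alpha beta N < 1)%R) :
  exists l : C,
    mahler_is mulZ2 (Pelt alpha beta N) lam l /\
    mahler_is mulD (Pelt alpha beta N) lam l.
Proof.
  rewrite <- l1_Pelt in hlam.
  destruct (ex_mahler mulZ2 _ _ hlam) as [l Hl].
  exists l. split; [exact Hl|].
  revert Hl. apply is_series_ext. intro n.
  unfold a_coef. now rewrite (coeff_gpow_mulZ2_mulD alpha beta N hsupp hrec).
Qed.
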